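(* Let ${}^*$ be a nonstandard analysis and $\mathfrak m$ an infinite cardinal. For every map $f:A\to B$ and every $\mathfrak m$-confined $x\in{}^*A$, the element ${}^*f(x)\in{}^*B$ is $\mathfrak m$-confined. Consequently, setting ${}^*A_{\mathfrak m}:=\{x\in{}^*A: x \text{ is } \mathfrak m\text{-confined}\}$ and letting $f:A\to B$ act by the restriction of ${}^*f$, the assignment $A\mapsto{}^*A_{\mathfrak m}$ is again a nonstandard analysis (and it is $\mathfrak m$-confined).
   Context: A nonstandard analysis is a functor ${}^*:\mathbf{Set}\to\mathbf{Set}$ (write ${}^*A$, ${}^*f$ for images of sets and maps) such that (i) it maps the full subcategory $\mathbf{Fin}$ of finite sets into itself and restricts to an equivalence of $\mathbf{Fin}$ with itself; (ii) it preserves finite projective limits (equivalently finite products and equalizers). Products ${}^*(A\times B)$ are identified with ${}^*A\times{}^*B$, and for $E\subseteq A$, ${}^*E$ is regarded as a subset of ${}^*A$ (image of the inclusion, which is injective). For an infinite cardinal $\mathfrak m$, an element $x\in{}^*A$ is $\mathfrak m$-confined if there is $A'\subseteq A$ with $|A'|\le\mathfrak m$ and $x\in{}^*A'$; the nonstandard analysis is $\mathfrak m$-confined if every element of ${}^*A$, for every set $A$, is $\mathfrak m$-confined. *)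

(* Sets are modelled by types, maps by functions, equality of
   maps is pointwise (extensional) equality, subsets by predicates. *)
From Stdlib Require Import List.

Definition injective {A B : Type} (f : A -> B) : Prop :=
  forall x y, f x = f y -> x = y.
Definition surjective {A B : Type} (f : A -> B) : Prop :=
  forall y, exists x, f x = y.
Definition bijective {A B : Type} (f : A -> B) : Prop :=
  injective f /\ surjective f.

Definition finiteT (A : Type) : Prop :=
  exists l : list A, NoDup l /\ forall x, In x l.

Definition is_functor (Fob : Type -> Type)
  (Fmap : forall A B : Type, (A -> B) -> Fob A -> Fob B) : Prop :=
  (forall (A : Type) (x : Fob A), Fmap A A (fun a => a) x = x) /\
  (forall (A B C : Type) (f : A -> B) (g : B -> C) (x : Fob A),
      Fmap A C (fun a => g (f a)) x = Fmap B C g (Fmap A B f x)).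

(* (i) maps Fin into Fin and restricts to an equivalence Fin -> Fin
   (faithful, full, essentially surjective). *)
Definition fin_equivalence (Fob : Type -> Type)
  (Fmap : forall A B : Type, (A -> B) -> Fob A -> Fob B) : Prop :=
  (forall A : Type, finiteT A -> finiteT (Fob A)) /\
  (forall (A B : Type), finiteT A -> finiteT B ->
     forall f g : A -> B, (forall x, Fmap A B f x = Fmap A B g x) ->
     forall a, f a = g a) /\
  (forall (A B : Type), finiteT A -> finiteT B ->
     forall h : Fob A -> Fob B, exists f : A -> B,
       forall x, Fmap A B f x = h x) /\
  (forall C : Type, finiteT C ->
     exists A : Type, finiteT A /\ exists h : Fob A -> C, bijective h).

(* (ii) preservation of finite projective limits: terminal object,
   binary products, equalizers. *)
Definition preserves_finite_limits (Fob : Type -> Type)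
  (Fmap : forall A B : Type, (A -> B) -> Fob A -> Fob B) : Prop :=
  (exists u : Fob unit, forall v : Fob unit, v = u) /\
  (forall A B : Type,
     bijective (fun z : Fob (A * B)%type =>
        (Fmap (A * B)%type A fst z, Fmap (A * B)%type B snd z))) /\
  (forall (A B : Type) (f g : A -> B),
     injective (Fmap {a : A | f a = g a} A (@proj1_sig _ _)) /\
     (forall x : Fob A,
        Fmap A B f x = Fmap A B g x <->
        exists y : Fob {a : A | f a = g a}, Fmap _ A (@proj1_sig _ _) y = x)).

Definition is_NSA (Fob : Type -> Type)
  (Fmap : forall A B : Type, (A -> B) -> Fob A -> Fob B) : Prop :=
  is_functor Fob Fmap /\ fin_equivalence Fob Fmap /\
  preserves_finite_limits Fob Fmap.

(* For E ⊆ A (a predicate P), *E ⊆ *A is the image of *(inclusion). *)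
Definition star_sub (Fob : Type -> Type)
  (Fmap : forall A B : Type, (A -> B) -> Fob A -> Fob B)
  {A : Type} (P : A -> Prop) (x : Fob A) : Prop :=
  exists y : Fob {a : A | P a}, Fmap {a : A | P a} A (@proj1_sig _ _) y = x.

(* The cardinal m is represented by a type M; |A'| <= m means an injection
   A' -> M; m infinite means an injection nat -> M. *)
Definition infinite_card (M : Type) : Prop :=
  exists i : nat -> M, injective i.

Definition confined (Fob : Type -> Type)
  (Fmap : forall A B : Type, (A -> B) -> Fob A -> Fob B)
  (M : Type) {A : Type} (x : Fob A) : Prop :=
  exists P : A -> Prop,
    (exists i : {a : A | P a} -> M, injective i) /\ star_sub Fob Fmap P x.

Definition is_confined_NSA (Fob : Type -> Type)
  (Fmap : forall A B : Type, (A -> B) -> Fob A -> Fob B) (M : Type) : Prop :=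
  forall (A : Type) (x : Fob A), confined Fob Fmap M x.

Definition conf_ob (Fob : Type -> Type)
  (Fmap : forall A B : Type, (A -> B) -> Fob A -> Fob B) (M : Type)
  (A : Type) : Type :=
  {x : Fob A | confined Fob Fmap M x}.

Definition conf_map (Fob : Type -> Type)
  (Fmap : forall A B : Type, (A -> B) -> Fob A -> Fob B) (M : Type)
  (H : forall (A B : Type) (f : A -> B) (x : Fob A),
        confined Fob Fmap M x -> confined Fob Fmap M (Fmap A B f x))
  (A B : Type) (f : A -> B) (x : conf_ob Fob Fmap M A) : conf_ob Fob Fmap M B :=
  exist _ (Fmap A B f (proj1_sig x)) (H A B f (proj1_sig x) (proj2_sig x)).

(* An element of *A is confined exactly when it is the image under some *g of
   an element of *X with |X| <= m.  Such images are clearly stable under every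
   *f.  For the restricted functor, finite sets cause nothing new (all their
   elements are confined, as m is infinite), and equalizers are inherited from
   those of the small sets.  For products, a pair of confined elements lives in
   *(P1 × P2) with |P1|, |P2| <= m, which is small because m · m = m; this is
   Hessenberg's theorem, proved by Zorn's lemma on partial pairings. *)
From Stdlib Require Import Classical ClassicalEpsilon ProofIrrelevance
  FunctionalExtensionality PropExtensionality Cantor List.
From mathcomp Require classical_sets.

Definition card_le (X Y : Type) : Prop := exists f : X -> Y, injective f.

Definition inj_on {X Y : Type} (P : X -> Prop) (f : X -> Y) : Prop :=
  forall x x', P x -> P x' -> f x = f x' -> x = x'.

Lemma sig_eq {A : Type} {P : A -> Prop} (u v : sig P) :
  proj1_sig u = proj1_sig v -> u = v.
Proof. destruct u, v; simpl; intros ->; f_equal; apply proof_irrelevance. Qed.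

Lemma card_le_trans (X Y Z : Type) : card_le X Y -> card_le Y Z -> card_le X Z.
Proof.
  intros [f Hf] [g Hg]. exists (fun x => g (f x)). intros x x' E. apply Hf, Hg, E.
Qed.

Lemma card_le_prod (X X' Y Y' : Type) :
  card_le X X' -> card_le Y Y' -> card_le (X * Y) (X' * Y').
Proof.
  intros [f Hf] [g Hg]. exists (fun p => (f (fst p), g (snd p))).
  intros [x y] [x' y'] E. injection E as Ex Ey. apply Hf in Ex. apply Hg in Ey.
  subst. reflexivity.
Qed.

Lemma card_le_finite_nat (X : Type) : finiteT X -> card_le X nat.
Proof.
  intros [l [_ Hl]].
  destruct (choice (fun x n => nth_error l n = Some x)
              (fun x => In_nth_error l x (Hl x))) as [f Hf].
  exists f. intros x y E. pose proof (Hf x) as Ex. rewrite E, Hf in Ex.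
  injection Ex as ->. reflexivity.
Qed.

Lemma card_le_sig_extend {X Y : Type} (P : X -> Prop) (Q : Y -> Prop) :
  card_le {x | P x} {y | Q y} -> Y ->
  exists k : X -> Y, (forall x, P x -> Q (k x)) /\ inj_on P k.
Proof.
  intros [f Hf] y0.
  exists (fun x => match excluded_middle_informative (P x) with
                   | left Px => proj1_sig (f (exist _ x Px))
                   | right _ => y0 end).
  split.
  - intros x Px. destruct (excluded_middle_informative (P x)); [|contradiction].
    exact (proj2_sig _).
  - intros x x' Px Px'.
    destruct (excluded_middle_informative (P x)); [|contradiction].
    destruct (excluded_middle_informative (P x')); [|contradiction].
    intro E. apply sig_eq, Hf in E. exact (f_equal (@proj1_sig _ _) E).
Qed.

Definition chain {T : Type} (F : (T -> Prop) -> Prop) : Prop :=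
  forall X Y, F X -> F Y -> (forall t, X t -> Y t) \/ (forall t, Y t -> X t).

Definition chain_union {T : Type} (F : (T -> Prop) -> Prop) (t : T) : Prop :=
  exists X, F X /\ X t.

Lemma pred_ext {T : Type} (X Y : T -> Prop) : (forall t, X t <-> Y t) -> X = Y.
Proof.
  intro H. apply functional_extensionality; intro t.
  apply propositional_extensionality, H.
Qed.

Lemma chain_union_common {T : Type} (F : (T -> Prop) -> Prop) (u v : T) :
  chain F -> chain_union F u -> chain_union F v -> exists X, F X /\ X u /\ X v.
Proof.
  intros HF [X [FX Xu]] [Y [FY Yv]].
  destruct (HF X Y FX FY) as [XY|YX]; [exists Y | exists X]; auto.
Qed.

(* [Zorn_bigcup] applied to the family of the [X] such that [P (X ∪ B)]. *)
Lemma zorn_above {T : Type} (P : (T -> Prop) -> Prop) (B : T -> Prop) :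
  P B ->
  (forall F, chain F -> (forall X, F X -> P X) -> P (chain_union F)) ->
  exists A, (forall t, B t -> A t) /\ P A /\
    forall A', (forall t, A t -> A' t) -> P A' -> forall t, A' t -> A t.
Proof.
  intros PB Pchain.
  set (P' := fun X : T -> Prop => P (fun t => X t \/ B t)).
  assert (P'chain : forall F : (T -> Prop) -> Prop,
    (forall X, F X -> P' X) -> classical_sets.total_on F classical_sets.subset ->
    P' (classical_sets.bigcup F (fun X => X))).
  { intros F FP Ftot. unfold P'.
    destruct (classic (exists X, F X)) as [[X0 FX0]|NF].
    - set (F' := fun Y => exists X, F X /\ Y = (fun t => X t \/ B t)).
      replace (fun t => classical_sets.bigcup F (fun X => X) t \/ B t)
        with (chain_union F').
      + apply Pchain.
        * intros Y Z [X [FX ->]] [X' [FX' ->]].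
          destruct (Ftot X X' FX FX') as [XX'|X'X]; [left|right];
            intros t [Ht|Ht]; auto.
        * intros Y [X [FX ->]]. exact (FP X FX).
      + apply pred_ext; intro t. split.
        * intros [Y [[X [FX ->]] [Xt|Bt]]]; [left; exists X; auto | right; exact Bt].
        * intros [[X FX Xt]|Bt].
          -- exists (fun t => X t \/ B t). split; [exists X; auto | left; exact Xt].
          -- exists (fun t => X0 t \/ B t). split; [exists X0; auto | right; exact Bt].
    - replace (fun t => classical_sets.bigcup F (fun X => X) t \/ B t) with B;
        [exact PB|].
      apply pred_ext; intro t. split; [right; exact H|].
      intros [[X FX _]|Bt]; [exfalso; apply NF; exists X; exact FX | exact Bt]. }
  destruct (classical_sets.Zorn_bigcup P'chain) as [A [PA Amax]].
  exists (fun t => A t \/ B t). split; [|split].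
  - intros t Bt. right. exact Bt.
  - exact PA.
  - intros A' AA' PA' t A't. apply NNPP. intro nt.
    apply (Amax A').
    + split; [intros s As; apply AA'; left; exact As|].
      intro A'A. apply nt. left. exact (A'A t A't).
    + unfold P'. replace (fun t => A' t \/ B t) with A'; [exact PA'|].
      apply pred_ext; intro s. split; [left; auto|].
      intros [Hs|Bs]; [exact Hs | apply AA'; right; exact Bs].
Qed.

Definition partial_injection {X Y : Type} (R : X * Y -> Prop) : Prop :=
  (forall x y y', R (x, y) -> R (x, y') -> y = y') /\
  (forall x x' y, R (x, y) -> R (x', y) -> x = x').

Lemma partial_injection_chain {X Y : Type} (F : (X * Y -> Prop) -> Prop) :
  chain F -> (forall R, F R -> partial_injection R) ->
  partial_injection (chain_union F).
Proof.
  intros HF HR. split.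
  - intros x y y' H H'.
    destruct (chain_union_common F _ _ HF H H') as [R [FR [Rxy Rxy']]].
    exact (proj1 (HR R FR) x y y' Rxy Rxy').
  - intros x x' y H H'.
    destruct (chain_union_common F _ _ HF H H') as [R [FR [Rxy Rx'y]]].
    exact (proj2 (HR R FR) x x' y Rxy Rx'y).
Qed.

(* A maximal partial injection is total on one of the two sides. *)
Theorem card_le_total (X Y : Type) : card_le X Y \/ card_le Y X.
Proof.
  destruct (zorn_above (@partial_injection X Y) (fun _ => False)) as [R [_ [[Rf Ri] Rmax]]].
  { split; intros; contradiction. }
  { exact partial_injection_chain. }
  destruct (classic (forall x, exists y, R (x, y))) as [Hx|Hx].
  { left. destruct (choice _ Hx) as [f Hf]. exists f.
    intros a b E. apply (Ri a b (f a)); [apply Hf | rewrite E; apply Hf]. }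
  destruct (classic (forall y, exists x, R (x, y))) as [Hy|Hy].
  { right. destruct (choice (fun y x => R (x, y)) Hy) as [g Hg]. exists g.
    intros a b E. apply (Rf (g a) a b); [apply Hg | rewrite E; apply Hg]. }
  exfalso.
  destruct (not_all_ex_not _ _ Hx) as [x0 Hx0].
  destruct (not_all_ex_not _ _ Hy) as [y0 Hy0].
  assert (Hext : partial_injection (fun p => R p \/ p = (x0, y0))).
  { split.
    - intros x y y' [H|H] [H'|H'].
      + exact (Rf _ _ _ H H').
      + injection H' as -> ->. exfalso. apply Hx0. exists y. exact H.
      + injection H as -> ->. exfalso. apply Hx0. exists y'. exact H'.
      + injection H as -> ->. injection H' as ->. reflexivity.
    - intros x x' y [H|H] [H'|H'].
      + exact (Ri _ _ _ H H').
      + injection H' as -> ->. exfalso. apply Hy0. exists x. exact H.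
      + injection H as -> ->. exfalso. apply Hy0. exists x'. exact H'.
      + injection H as -> ->. injection H' as ->. reflexivity. }
  apply Hx0. exists y0.
  apply (Rmax _ (fun t Rt => or_introl Rt) Hext). right. reflexivity.
Qed.

Section Pairing.
Variable M : Type.

Definition closed2 (S : M -> Prop) (G : M -> M -> M) : Prop :=
  forall a b, S a -> S b -> S (G a b).

Definition inj2_on (S : M -> Prop) (G : M -> M -> M) : Prop :=
  forall a b a' b', S a -> S b -> S a' -> S b' -> G a b = G a' b' -> a = a' /\ b = b'.

Definition graph_dom (A : M * M * M -> Prop) (a : M) : Prop := exists b c, A (a, b, c).

Record pairing_graph (A : M * M * M -> Prop) : Prop := {
  pairing_functional : forall p c c', A (p, c) -> A (p, c') -> c = c';
  pairing_injective : forall p p' c, A (p, c) -> A (p', c) -> p = p';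
  pairing_total : forall a b, graph_dom A a -> graph_dom A b -> exists c, A (a, b, c);
  pairing_closed : forall a b c, A (a, b, c) -> graph_dom A b /\ graph_dom A c }.

Definition graph_of (S : M -> Prop) (G : M -> M -> M) (t : M * M * M) : Prop :=
  let '(a, b, c) := t in S a /\ S b /\ c = G a b.

Lemma graph_dom_graph_of (S : M -> Prop) (G : M -> M -> M) (a : M) :
  S a -> graph_dom (graph_of S G) a.
Proof. intro Sa. exists a, (G a a). simpl. auto. Qed.

Lemma graph_of_pairing (S : M -> Prop) (G : M -> M -> M) :
  closed2 S G -> inj2_on S G -> pairing_graph (graph_of S G).
Proof.
  intros GS Ginj. split.
  - intros [a b] c c' [_ [_ ->]] [_ [_ ->]]. reflexivity.
  - intros [a b] [a' b'] c [Sa [Sb ->]] [Sa' [Sb' E]].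
    destruct (Ginj a b a' b' Sa Sb Sa' Sb' E) as [-> ->]. reflexivity.
  - intros a b [? [? [Sa _]]] [? [? [Sb _]]]. exists (G a b). simpl. auto.
  - intros a b c [Sa [Sb ->]].
    split; apply graph_dom_graph_of; [exact Sb | apply GS; assumption].
Qed.

Lemma pairing_graph_chain (F : (M * M * M -> Prop) -> Prop) :
  chain F -> (forall A, F A -> pairing_graph A) -> pairing_graph (chain_union F).
Proof.
  intros HF HA. split.
  - intros p c c' H H'.
    destruct (chain_union_common F _ _ HF H H') as [A [FA [Ac Ac']]].
    exact (pairing_functional A (HA A FA) p c c' Ac Ac').
  - intros p p' c H H'.
    destruct (chain_union_common F _ _ HF H H') as [A [FA [Ap Ap']]].
    exact (pairing_injective A (HA A FA) p p' c Ap Ap').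
  - intros a b [b1 [c1 Ha]] [b2 [c2 Hb]].
    destruct (chain_union_common F _ _ HF Ha Hb) as [A [FA [Aa Ab]]].
    destruct (pairing_total A (HA A FA) a b) as [c Ac];
      [exists b1, c1; exact Aa | exists b2, c2; exact Ab |].
    exists c, A. auto.
  - intros a b c [A [FA Aabc]].
    destruct (pairing_closed A (HA A FA) a b c Aabc) as [[b1 [c1 Hb]] [b2 [c2 Hc]]].
    split; [exists b1, c1, A | exists b2, c2, A]; auto.
Qed.

Lemma pairing_function (A : M * M * M -> Prop) :
  pairing_graph A -> inhabited M ->
  exists g : M -> M -> M, closed2 (graph_dom A) g /\ inj2_on (graph_dom A) g /\
    forall a b c, A (a, b, c) -> c = g a b.
Proof.
  intros PA inh.
  set (g := fun a b => epsilon inh (fun c => A (a, b, c))).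
  assert (Ag : forall a b, graph_dom A a -> graph_dom A b -> A (a, b, g a b)).
  { intros a b Sa Sb. apply epsilon_spec, (pairing_total A PA a b Sa Sb). }
  exists g. split; [|split].
  - intros a b Sa Sb. exact (proj2 (pairing_closed A PA _ _ _ (Ag a b Sa Sb))).
  - intros a b a' b' Sa Sb Sa' Sb' E.
    pose proof (Ag a b Sa Sb) as H. rewrite E in H.
    pose proof (pairing_injective A PA _ _ _ H (Ag a' b' Sa' Sb')) as E'.
    injection E' as -> ->. auto.
  - intros a b c Aabc.
    apply (pairing_functional A PA (a, b) c (g a b) Aabc), Ag;
      [exists b, c | exact (proj1 (pairing_closed A PA a b c Aabc))].
    exact Aabc.
Qed.

Lemma to_nat_inj : injective to_nat.
Proof. intros p q E. rewrite <- (cancel_of_to p), E. apply cancel_of_to. Qed.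

(* The image of [i : nat -> M] with the pairing transported from Cantor's
   [to_nat : nat * nat -> nat]. *)
Definition range_pairing (i : nat -> M) : M * M * M -> Prop :=
  let index x := epsilon (inhabits 0) (fun n => i n = x) in
  graph_of (fun x => exists n, i n = x) (fun x y => i (to_nat (index x, index y))).

Lemma range_pairing_graph (i : nat -> M) :
  injective i -> pairing_graph (range_pairing i).
Proof.
  intro Hi. apply graph_of_pairing.
  - intros a b _ _. eexists. reflexivity.
  - intros a b a' b' Ha Hb Ha' Hb' E.
    apply Hi, to_nat_inj in E. injection E as Ea Eb.
    assert (spec : forall x, (exists n, i n = x) ->
              i (epsilon (inhabits 0) (fun n => i n = x)) = x)
      by (intro x; apply (epsilon_spec (inhabits 0) (fun n => i n = x))).
    split; [rewrite <- (spec a Ha), <- (spec a' Ha'), Ea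
           | rewrite <- (spec b Hb), <- (spec b' Hb'), Eb]; reflexivity.
Qed.

(* Two distinct points [e0, e1] of [S] give two disjoint copies [g e0 _] and
   [g e1 _] of [S] inside [S]; a set [T] injecting into [S] goes into the second. *)
Lemma absorb_into (S T : M -> Prop) (g : M -> M -> M) (e0 e1 : M) (k : M -> M) :
  closed2 S g -> inj2_on S g -> S e0 -> S e1 -> e0 <> e1 ->
  (forall x, T x -> S (k x)) -> inj_on T k ->
  exists enc : M -> M,
    (forall x, S x \/ T x -> S (enc x)) /\ inj_on (fun x => S x \/ T x) enc.
Proof.
  intros gS ginj S0 S1 e01 kS kinj.
  exists (fun x => match excluded_middle_informative (S x) with
                   | left _ => g e0 x | right _ => g e1 (k x) end).
  split.
  - intros x Hx. destruct (excluded_middle_informative (S x)) as [Sx|nSx].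
    + exact (gS _ _ S0 Sx).
    + destruct Hx as [Sx|Tx]; [contradiction|]. exact (gS _ _ S1 (kS x Tx)).
  - intros x x' Hx Hx'.
    destruct (excluded_middle_informative (S x)) as [Sx|nSx];
    destruct (excluded_middle_informative (S x')) as [Sx'|nSx']; intro E.
    + exact (proj2 (ginj _ _ _ _ S0 Sx S0 Sx' E)).
    + destruct Hx' as [|Tx']; [contradiction|].
      destruct (e01 (proj1 (ginj _ _ _ _ S0 Sx S1 (kS _ Tx') E))).
    + destruct Hx as [|Tx]; [contradiction|].
      destruct (e01 (eq_sym (proj1 (ginj _ _ _ _ S1 (kS _ Tx) S0 Sx' E)))).
    + destruct Hx as [|Tx]; [contradiction|]. destruct Hx' as [|Tx']; [contradiction|].
      exact (kinj _ _ Tx Tx' (proj2 (ginj _ _ _ _ S1 (kS _ Tx) S1 (kS _ Tx') E))).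
Qed.

(* New pairs are sent injectively into [D] through the encoding [enc] of
   [S ∪ D] into [S]; old pairs keep their value, which lies in [S]. *)
Lemma extend_pairing (S D : M -> Prop) (g : M -> M -> M) (h enc : M -> M) :
  closed2 S g -> inj2_on S g ->
  (forall a, S a -> D (h a)) -> (forall y, D y -> ~ S y) -> inj_on S h ->
  (forall x, S x \/ D x -> S (enc x)) -> inj_on (fun x => S x \/ D x) enc ->
  exists G : M -> M -> M,
    closed2 (fun x => S x \/ D x) G /\ inj2_on (fun x => S x \/ D x) G /\
    forall a b, S a -> S b -> G a b = g a b.
Proof.
  intros gS ginj hD DnS hinj encS encinj.
  exists (fun x y => match excluded_middle_informative (S x /\ S y) with
                     | left _ => g x y | right _ => h (g (enc x) (enc y)) end).
  split; [|split].
  - intros x y Hx Hy.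
    destruct (excluded_middle_informative (S x /\ S y)) as [[Sx Sy]|_].
    + left. exact (gS x y Sx Sy).
    + right. apply hD, gS; apply encS; assumption.
  - intros x y x' y' Hx Hy Hx' Hy'.
    destruct (excluded_middle_informative (S x /\ S y)) as [[Sx Sy]|nS];
    destruct (excluded_middle_informative (S x' /\ S y')) as [[Sx' Sy']|nS']; intro E.
    + exact (ginj _ _ _ _ Sx Sy Sx' Sy' E).
    + destruct (DnS _ (hD _ (gS _ _ (encS _ Hx') (encS _ Hy')))).
      rewrite <- E. exact (gS _ _ Sx Sy).
    + destruct (DnS _ (hD _ (gS _ _ (encS _ Hx) (encS _ Hy)))).
      rewrite E. exact (gS _ _ Sx' Sy').
    + apply hinj in E; try (apply gS; apply encS; assumption).
      apply ginj in E; try (apply encS; assumption).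
      destruct E as [Ex Ey]. split; apply encinj; assumption.
  - intros a b Sa Sb.
    destruct (excluded_middle_informative (S a /\ S b)) as [_|nS];
      [reflexivity | destruct (nS (conj Sa Sb))].
Qed.

Lemma pairing_graph_extend (A : M * M * M -> Prop) (g : M -> M -> M)
    (e0 e1 : M) (h : M -> M) :
  let S := graph_dom A in
  pairing_graph A -> closed2 S g -> inj2_on S g ->
  (forall a b c, A (a, b, c) -> c = g a b) ->
  S e0 -> S e1 -> e0 <> e1 -> (forall a, S a -> ~ S (h a)) -> inj_on S h ->
  exists A', pairing_graph A' /\ (forall t, A t -> A' t) /\ ~ (forall t, A' t -> A t).
Proof.
  intros S PA gS ginj gA S0 S1 e01 hS hinj.
  set (D := fun y => exists a, S a /\ h a = y).
  set (hinv := fun y => epsilon (inhabits e0) (fun a => S a /\ h a = y)).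
  assert (hinvP : forall y, D y -> S (hinv y) /\ h (hinv y) = y)
    by (intros y Dy; exact (epsilon_spec _ (fun a => S a /\ h a = y) Dy)).
  assert (hinv_inj : inj_on D hinv).
  { intros y y' Dy Dy' E. rewrite <- (proj2 (hinvP y Dy)), E. apply hinvP, Dy'. }
  assert (DnS : forall y, D y -> ~ S y) by (intros y [a [Sa <-]]; exact (hS a Sa)).
  destruct (absorb_into S D g e0 e1 hinv gS ginj S0 S1 e01
              (fun y Dy => proj1 (hinvP y Dy)) hinv_inj) as [enc [encS encinj]].
  destruct (extend_pairing S D g h enc gS ginj (fun a Sa => ex_intro _ a (conj Sa eq_refl))
              DnS hinj encS encinj) as [G [GS [Ginj Gg]]].
  exists (graph_of (fun x => S x \/ D x) G). split; [|split].
  - exact (graph_of_pairing _ G GS Ginj).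
  - intros [[a b] c] Aabc.
    assert (Sa : S a) by (exists b, c; exact Aabc).
    assert (Sb : S b) by exact (proj1 (pairing_closed A PA a b c Aabc)).
    split; [left; exact Sa | split; [left; exact Sb|]].
    rewrite Gg by assumption. exact (gA a b c Aabc).
  - intro A'A.
    assert (Dx : D (h e0)) by (exists e0; auto).
    apply (DnS _ Dx). exists (h e0), (G (h e0) (h e0)). apply A'A.
    split; [right; exact Dx | split; [right; exact Dx | reflexivity]].
Qed.
End Pairing.

(* Take a maximal pairing [g : S * S -> S] above a countable one; if [S]
   injected into its complement, [g] could be extended, so the complement
   injects into [S], hence [M] into [S] and [M * M] into [S * S], into [M]. *)
Theorem infinite_card_square (M : Type) : infinite_card M -> card_le (M * M) M.
Proof.
  intros [i Hi].
  destruct (zorn_above (pairing_graph M) (range_pairing M i)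
              (range_pairing_graph M i Hi) (pairing_graph_chain M))
    as [A [rangeA [PA Amax]]].
  set (S := graph_dom M A).
  assert (Si : forall n, S (i n)).
  { intro n. exists (i n). eexists. apply rangeA. simpl.
    split; [exists n; reflexivity | split; [exists n; reflexivity | reflexivity]]. }
  assert (i01 : i 0 <> i 1) by (intro E; apply Hi in E; discriminate).
  destruct (pairing_function M A PA (inhabits (i 0))) as [g [gS [ginj gA]]].
  destruct (card_le_total {a | ~ S a} {a | S a}) as [Hc|Hc];
    destruct (card_le_sig_extend _ _ Hc (i 0)) as [k [kS kinj]].
  - destruct (absorb_into M S (fun a => ~ S a) g (i 0) (i 1) k gS ginj (Si 0) (Si 1)
                i01 kS kinj) as [enc [encS encinj]].
    assert (encS' : forall a, S (enc a)) by (intro a; apply encS, classic).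
    exists (fun p => g (enc (fst p)) (enc (snd p))).
    intros [a b] [a' b'] E.
    destruct (ginj _ _ _ _ (encS' a) (encS' b) (encS' a') (encS' b') E) as [Ea Eb].
    apply encinj in Ea; try apply classic. apply encinj in Eb; try apply classic.
    subst. reflexivity.
  - destruct (pairing_graph_extend M A g (i 0) (i 1) k PA gS ginj gA (Si 0) (Si 1)
                i01 kS kinj) as [A' [PA' [AA' nA'A]]].
    destruct (nA'A (Amax A' AA' PA')).
Qed.

Section Confinement.
Variables (Fob : Type -> Type) (Fmap : forall A B : Type, (A -> B) -> Fob A -> Fob B)
  (M : Type).
Hypothesis Ffun : is_functor Fob Fmap.

Local Notation conf := (confined Fob Fmap M).

Lemma Fmap_comp {A B C : Type} (f : A -> B) (g : B -> C) (x : Fob A) :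
  Fmap B C g (Fmap A B f x) = Fmap A C (fun a => g (f a)) x.
Proof. symmetry. apply (proj2 Ffun). Qed.

Lemma confined_Fmap_small {X A : Type} (g : X -> A) (y : Fob X) :
  card_le X M -> conf (Fmap X A g y).
Proof.
  intros [i Hi].
  set (Q := fun a => exists x, g x = a).
  exists Q. split.
  - destruct (choice (fun (q : {a | Q a}) x => g x = proj1_sig q)
                (fun q => proj2_sig q)) as [pre Hpre].
    exists (fun q => i (pre q)). intros q q' E. apply Hi in E.
    apply sig_eq. rewrite <- Hpre, <- (Hpre q'), E. reflexivity.
  - exists (Fmap X _ (fun x => exist Q (g x) (ex_intro _ x eq_refl)) y).
    rewrite Fmap_comp. reflexivity.
Qed.

Lemma confined_Fmap {A B : Type} (f : A -> B) (x : Fob A) :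
  conf x -> conf (Fmap A B f x).
Proof.
  intros [P [HP [y <-]]]. rewrite Fmap_comp. exact (confined_Fmap_small _ y HP).
Qed.

Lemma confined_small {X : Type} (x : Fob X) : card_le X M -> conf x.
Proof.
  intro HX. rewrite <- (proj1 Ffun X x). exact (confined_Fmap_small _ x HX).
Qed.

Lemma confined_finite {X : Type} (x : Fob X) :
  infinite_card M -> finiteT X -> conf x.
Proof.
  intros HM HX. apply confined_small.
  exact (card_le_trans _ _ _ (card_le_finite_nat X HX) HM).
Qed.

Hypothesis Flim : preserves_finite_limits Fob Fmap.

Lemma confined_pair {A B : Type} (z : Fob (A * B)) :
  card_le (M * M) M -> conf (Fmap _ A fst z) -> conf (Fmap _ B snd z) -> conf z.
Proof.
  destruct Flim as [_ [Hprod _]].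
  intros HMM [P1 [HP1 [y1 Hy1]]] [P2 [HP2 [y2 Hy2]]].
  destruct (proj2 (Hprod _ _) (y1, y2)) as [w Hw]. injection Hw as Hw1 Hw2.
  set (k := fun p : {a | P1 a} * {b | P2 b} => (proj1_sig (fst p), proj1_sig (snd p))).
  replace z with (Fmap _ _ k w).
  - apply confined_Fmap_small.
    exact (card_le_trans _ _ _ (card_le_prod _ _ _ _ HP1 HP2) HMM).
  - apply (proj1 (Hprod A B)). cbv beta. f_equal.
    + rewrite <- Hy1, <- Hw1, !Fmap_comp. reflexivity.
    + rewrite <- Hy2, <- Hw2, !Fmap_comp. reflexivity.
Qed.

Lemma confined_equalizer {A B : Type} (f g : A -> B) (y : Fob {a | f a = g a}) :
  conf (Fmap _ A (@proj1_sig _ _) y) -> conf y.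
Proof.
  destruct Flim as [_ [_ Heq]].
  intros [P [HP [w Hw]]].
  set (f' := fun p : {a | P a} => f (proj1_sig p)).
  set (g' := fun p : {a | P a} => g (proj1_sig p)).
  assert (Ew : Fmap _ B f' w = Fmap _ B g' w).
  { unfold f', g'.
    rewrite <- (Fmap_comp (@proj1_sig _ _) f w), <- (Fmap_comp (@proj1_sig _ _) g w), Hw.
    apply (proj2 (proj2 (Heq A B f g) _)). exists y. reflexivity. }
  destruct (proj1 (proj2 (Heq _ B f' g') w) Ew) as [v Hv].
  set (k := fun q : {p : {a | P a} | f' p = g' p} =>
              exist (fun a => f a = g a) (proj1_sig (proj1_sig q)) (proj2_sig q)).
  replace y with (Fmap _ _ k v).
  - apply confined_Fmap_small.
    destruct HP as [i Hi]. exists (fun q => i (proj1_sig q)).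
    intros q q' E. apply Hi in E. apply sig_eq, E.
  - apply (proj1 (Heq A B f g)). rewrite Fmap_comp, <- Hw, <- Hv, Fmap_comp.
    reflexivity.
Qed.


Variable H : forall (A B : Type) (f : A -> B) (x : Fob A), conf x -> conf (Fmap A B f x).

Local Notation cob := (conf_ob Fob Fmap M).
Local Notation cmap := (conf_map Fob Fmap M H).

Lemma conf_is_functor : is_functor cob cmap.
Proof.
  destruct Ffun as [Hid Hcomp]. split.
  - intros A x. apply sig_eq, Hid.
  - intros A B C f g x. apply sig_eq, Hcomp.
Qed.

Lemma conf_fin_equivalence :
  infinite_card M -> fin_equivalence Fob Fmap -> fin_equivalence cob cmap.
Proof.
  intros HM [Hfin [Hfaith [Hfull Hess]]].
  set (incl := fun A (HA : finiteT A) (x : Fob A) =>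
                 exist (fun x => conf x) x (confined_finite x HM HA) : cob A).
  split; [|split; [|split]].
  - intros A HA. destruct (Hfin A HA) as [l [Hnd Hl]]. exists (map (incl A HA) l). split.
    + apply NoDup_map_NoDup_ForallPairs; [|exact Hnd].
      intros x y _ _ E. exact (f_equal (@proj1_sig _ _) E).
    + intro y. replace y with (incl A HA (proj1_sig y)) by (apply sig_eq; reflexivity).
      apply in_map, Hl.
  - intros A B HA HB f g Hfg. apply Hfaith; [exact HA | exact HB |].
    intro x. exact (f_equal (@proj1_sig _ _) (Hfg (incl A HA x))).
  - intros A B HA HB h.
    destruct (Hfull A B HA HB (fun x => proj1_sig (h (incl A HA x)))) as [f Hf].
    exists f. intro x. apply sig_eq. simpl. rewrite Hf.
    do 2 f_equal. apply sig_eq. reflexivity.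
  - intros C HC. destruct (Hess C HC) as [A [HA [h [hinj hsurj]]]].
    exists A. split; [exact HA|]. exists (fun x => h (proj1_sig x)). split.
    + intros x y E. apply sig_eq, hinj, E.
    + intro c. destruct (hsurj c) as [x Hx]. exists (incl A HA x). exact Hx.
Qed.

Lemma conf_preserves_finite_limits :
  infinite_card M -> card_le (M * M) M -> preserves_finite_limits cob cmap.
Proof.
  intros HM HMM. pose proof Flim as [[u Hu] [Hprod Heq]].
  split; [|split].
  - assert (cu : conf u).
    { apply confined_small. destruct HM as [i _].
      exists (fun _ => i 0). intros [] [] _. reflexivity. }
    exists (exist _ u cu). intro v. apply sig_eq, Hu.
  - intros A B. split.
    + intros z z' E.
      pose proof (f_equal (fun p => proj1_sig (fst p)) E) as E1.
      pose proof (f_equal (fun p => proj1_sig (snd p)) E) as E2. simpl in E1, E2.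
      apply sig_eq, (proj1 (Hprod A B)). cbv beta. rewrite E1, E2. reflexivity.
    + intros [y1 y2]. destruct (proj2 (Hprod A B) (proj1_sig y1, proj1_sig y2)) as [z Hz].
      injection Hz as Hz1 Hz2.
      assert (cz : conf z).
      { apply confined_pair; [exact HMM | rewrite Hz1; exact (proj2_sig y1)
                                        | rewrite Hz2; exact (proj2_sig y2)]. }
      exists (exist _ z cz). f_equal; apply sig_eq; assumption.
  - intros A B f g. split.
    + intros z z' E. apply sig_eq, (proj1 (Heq A B f g)).
      exact (f_equal (@proj1_sig _ _) E).
    + intro x. split.
      * intro E. apply (f_equal (@proj1_sig _ _)) in E.
        destruct (proj1 (proj2 (Heq A B f g) (proj1_sig x)) E) as [y Hy].
        assert (cy : conf y).
        { apply (confined_equalizer f g). rewrite Hy. exact (proj2_sig x). }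
        exists (exist _ y cy). apply sig_eq. exact Hy.
      * intros [y Hy]. apply sig_eq, (proj2 (proj2 (Heq A B f g) (proj1_sig x))).
        exists (proj1_sig y). rewrite <- Hy. reflexivity.
Qed.

Lemma conf_is_confined : is_confined_NSA cob cmap M.
Proof.
  intros A [x [P [HP [w Hw]]]].
  exists P. split; [exact HP|].
  exists (exist _ w (confined_small w HP)). apply sig_eq. exact Hw.
Qed.

End Confinement.

Theorem mainTheorem2
  (Fob : Type -> Type)
  (Fmap : forall A B : Type, (A -> B) -> Fob A -> Fob B)
  (HF : is_NSA Fob Fmap)
  (M : Type) (HM : infinite_card M) :
  (forall (A B : Type) (f : A -> B) (x : Fob A),
      confined Fob Fmap M x -> confined Fob Fmap M (Fmap A B f x)) /\
  (forall H : (forall (A B : Type) (f : A -> B) (x : Fob A),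
        confined Fob Fmap M x -> confined Fob Fmap M (Fmap A B f x)),
      is_NSA (conf_ob Fob Fmap M) (conf_map Fob Fmap M H) /\
      is_confined_NSA (conf_ob Fob Fmap M) (conf_map Fob Fmap M H) M).
Proof.
  destruct HF as [Ffun [Ffin Flim]].
  split; [exact (@confined_Fmap Fob Fmap M Ffun) |].
  intro H. split; [split; [|split]|].
  - exact (conf_is_functor Fob Fmap M Ffun H).
  - exact (conf_fin_equivalence Fob Fmap M Ffun H HM Ffin).
  - exact (conf_preserves_finite_limits Fob Fmap M Ffun Flim H HM
             (infinite_card_square M HM)).
  - exact (conf_is_confined Fob Fmap M Ffun H).
Qed.
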